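(* Let $\mathcal{R}^{rsc}$ be a rich single-crossing domain and $F:\mathcal{R}^{rsc}\to\mathbb{Z}$ a mechanism such that $F$ is monotone, $V^F$ is continuous, and the range $Rn(F)$ is finite. Then $F$ is strategy-proof. (The same holds when $\mathcal{R}^{rsc}$ is replaced by a closed interval $[\underline R,\overline R]\subseteq\mathcal{R}^{rsc}$.)
   Context: $\mathbb{Z}=[0,\infty)\times[0,1]$; $(t',q')<(t'',q'')$ means $t'<t''$, $q'<q''$; $x\le y$ means $x=y$ or $x<y$; $\square(z)=\{x:x\le z\}$. A classical preference is a complete transitive relation $R$ on $\mathbb{Z}$ (strict part $P$, indifference $I$) strictly decreasing in $t$ for fixed $q$, strictly increasing in $q$ for fixed $t$, with closed upper and lower contour sets. Distinct classical preferences satisfy single-crossing if any indifference set of one meets any indifference set of the other in at most one point. A rich single-crossing domain $\mathcal{R}^{rsc}$ is a set of pairwise single-crossing classical preferences such that for all $x'<x''$ some member is indifferent between them. For distinct members, $R'\prec R''$ means $\square(z)\cap\{x:xR''z\}\subseteq\square(z)\cap\{x:xR'z\}$ for all $z$; $\prec$ is a linear order and $\mathcal{R}^{rsc}$ has the order topology. A mechanism $F$ maps the domain into $\mathbb{Z}$; it is strategy-proof if $F(R')R'F(R'')$ for all $R',R''$, and monotone if $R'\prec R''$ implies $F(R')\le F(R'')$. $V^F(R)=\{z: zIF(R)\}$ is continuous if for every $R$ and every monotone sequence $R^n\to R$ in the order topology (i.e. $R^n\precsim R^{n+1}$ for all $n$, or $R^{n+1}\precsim R^n$ for all $n$), $F(R^n)$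 converges in $\mathbb{Z}$ and $\lim F(R^n)\,I\,F(R)$. *)

From Stdlib Require Import Reals List.
Open Scope R_scope.

(* The consumption set  Z = [0,oo) x [0,1]  (first coordinate t, second q). *)
Definition inZ (x : R * R) : Prop :=
  0 <= fst x /\ 0 <= snd x /\ snd x <= 1.

Definition ltZ (x y : R * R) : Prop := fst x < fst y /\ snd x < snd y.
Definition leZ (x y : R * R) : Prop := x = y \/ ltZ x y.
Definition box (z x : R * R) : Prop := inZ x /\ leZ x z.

Definition Pref := R * R -> R * R -> Prop.

Definition strictP (Rl : Pref) (x y : R * R) : Prop := Rl x y /\ ~ Rl y x.
Definition indiff (Rl : Pref) (x y : R * R) : Prop := Rl x y /\ Rl y x.

(* Convergence of a sequence in R^2 (Euclidean topology = componentwise). *)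
Definition cvZ (u : nat -> R * R) (a : R * R) : Prop :=
  Un_cv (fun n => fst (u n)) (fst a) /\ Un_cv (fun n => snd (u n)) (snd a).

(* A subset S of Z is closed (in Z, equivalently in R^2 since Z is closed):
   it contains the limits (in Z) of its convergent sequences. *)
Definition closedZ (S : R * R -> Prop) : Prop :=
  forall (u : nat -> R * R) (a : R * R),
    (forall n, inZ (u n) /\ S (u n)) -> inZ a -> cvZ u a -> S a.

Definition classical (Rl : Pref) : Prop :=
  (forall x y, Rl x y -> inZ x /\ inZ y) /\
  (forall x y, inZ x -> inZ y -> Rl x y \/ Rl y x) /\
  (forall x y z, Rl x y -> Rl y z -> Rl x z) /\
  (forall t t' q, inZ (t, q) -> inZ (t', q) -> t < t' -> strictP Rl (t, q) (t', q)) /\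
  (forall t q q', inZ (t, q) -> inZ (t, q') -> q < q' -> strictP Rl (t, q') (t, q)) /\
  (forall z, inZ z ->
     closedZ (fun x => inZ x /\ Rl x z) /\ closedZ (fun x => inZ x /\ Rl z x)).

Definition single_crossing (R1 R2 : Pref) : Prop :=
  forall z1 z2 x y,
    indiff R1 x z1 -> indiff R2 x z2 ->
    indiff R1 y z1 -> indiff R2 y z2 -> x = y.

Definition rich_single_crossing (dom : Pref -> Prop) : Prop :=
  (forall Rl, dom Rl -> classical Rl) /\
  (forall R1 R2, dom R1 -> dom R2 -> R1 <> R2 -> single_crossing R1 R2) /\
  (forall x1 x2, inZ x1 -> inZ x2 -> ltZ x1 x2 ->
     exists Rl, dom Rl /\ indiff Rl x1 x2).

Definition prec (R1 R2 : Pref) : Prop :=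
  R1 <> R2 /\
  forall z, inZ z -> forall x, box z x -> R2 x z -> R1 x z.
Definition precsim (R1 R2 : Pref) : Prop := prec R1 R2 \/ R1 = R2.

(* Convergence in the order topology of the linearly ordered set D
   (subbasis: open rays with endpoints in D). *)
Definition order_cv (D : Pref -> Prop) (Rs : nat -> Pref) (Rl : Pref) : Prop :=
  (forall A, D A -> prec A Rl -> exists N, forall n, (N <= n)%nat -> prec A (Rs n)) /\
  (forall B, D B -> prec Rl B -> exists N, forall n, (N <= n)%nat -> prec (Rs n) B).

Definition monotone_seq (Rs : nat -> Pref) : Prop :=
  (forall n, precsim (Rs n) (Rs (S n))) \/ (forall n, precsim (Rs (S n)) (Rs n)).

Definition mechanism (D : Pref -> Prop) (F : Pref -> R * R) : Prop :=
  forall Rl, D Rl -> inZ (F Rl).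

Definition strategy_proof (D : Pref -> Prop) (F : Pref -> R * R) : Prop :=
  forall R1 R2, D R1 -> D R2 -> R1 (F R1) (F R2).

Definition monotone_mech (D : Pref -> Prop) (F : Pref -> R * R) : Prop :=
  forall R1 R2, D R1 -> D R2 -> prec R1 R2 -> leZ (F R1) (F R2).

Definition VF_continuous (D : Pref -> Prop) (F : Pref -> R * R) : Prop :=
  forall (Rl : Pref) (Rs : nat -> Pref),
    D Rl -> (forall n, D (Rs n)) -> monotone_seq Rs -> order_cv D Rs Rl ->
    exists L, inZ L /\ cvZ (fun n => F (Rs n)) L /\ indiff Rl L (F Rl).

Definition finite_range (D : Pref -> Prop) (F : Pref -> R * R) : Prop :=
  exists l : list (R * R), forall Rl, D Rl -> In (F Rl) l.

Definition interval (dom : Pref -> Prop) (lo hi : Pref) (Rl : Pref) : Prop :=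
  dom Rl /\ precsim lo Rl /\ precsim Rl hi.

From Stdlib Require Import Reals List.
From Stdlib Require Import Lra Lia Classical ClassicalEpsilon.
Open Scope R_scope.

(* Single crossing makes [prec] a linear order. If neither of two preferences precedes
   the other, there are interior bundles carrying strict "reversals" of both
   orientations; connectedness of the segment joining them, together with the
   intermediate value property of indifference curves, yields a bundle at which the
   two indifference curves coincide locally, contradicting single crossing. In a rich
   domain every preference is then located, monotonically for [prec], by the point of
   the antidiagonal of a box [c, d] that it finds indifferent to [c].

   For strategy-proofness it suffices to compare types whose outcomes [c < d] are
   adjacent in the finite range; the general case follows by induction on the number
   of outcomes in between. Along the antidiagonal parametrisation the outcome jumps
   from [c] to [d] at some type; continuity of [V^F] from both sides makes that type
   indifferent between [c] and [d], and [prec] transfers this comparison to the lower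
   and the higher type. *)

(** * Real analysis *)

Lemma Un_cv_bound (u : nat -> R) (l K : R) :
  (forall n, Rabs (u n - l) <= K / (INR n + 1)) -> Un_cv u l.
Proof.
  intros H eps Heps.
  assert (HK : 0 < Rabs K + 1) by (pose proof (Rabs_pos K); lra).
  destruct (archimed_cor1 (eps / (Rabs K + 1))) as [N [HN HN0]].
  { apply Rdiv_lt_0_compat; lra. }
  exists N. intros n Hn. unfold Rdist.
  assert (HNn : INR N <= INR n) by (apply le_INR; lia).
  assert (HN0' : 0 < INR N) by (apply lt_0_INR; lia).
  assert (Hinv : / (INR n + 1) < eps / (Rabs K + 1)).
  { apply Rle_lt_trans with (/ INR N); auto. apply Rinv_le_contravar; lra. }
  assert (Hp : 0 < / (INR n + 1)) by (apply Rinv_0_lt_compat; pose proof (pos_INR n); lra).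
  assert (Heq : (Rabs K + 1) * (eps / (Rabs K + 1)) = eps) by (field; lra).
  specialize (H n). unfold Rdiv in *.
  pose proof (Rle_abs K). nra.
Qed.

Lemma Un_cv_const (c : R) : Un_cv (fun _ => c) c.
Proof. intros e he. exists 0%nat. intros n _. unfold Rdist. rewrite Rminus_diag, Rabs_R0. lra. Qed.

Lemma Un_cv_bounds (u : nat -> R) (l a b : R) :
  (forall n, a <= u n <= b) -> Un_cv u l -> a <= l <= b.
Proof.
  intros H Hc.
  assert (Hlim : forall e, 0 < e -> exists n, Rabs (u n - l) < e).
  { intros e He. destruct (Hc e He) as [N HN]. exists N. exact (HN N (le_n N)). }
  split; apply Rnot_lt_le; intro Hl.
  - destruct (Hlim (a - l)) as [n Hn]; [lra|]. apply Rabs_def2 in Hn. specialize (H n). lra.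
  - destruct (Hlim (l - b)) as [n Hn]; [lra|]. apply Rabs_def2 in Hn. specialize (H n). lra.
Qed.

Lemma Un_cv_from_above (a b : R) : a < b ->
  exists u : nat -> R, (forall n, a < u n < b) /\ (forall n, u (S n) < u n) /\ Un_cv u a.
Proof.
  intro Hab. exists (fun n => a + (b - a) / (INR n + 2)).
  assert (Hstep : forall n, 0 < (b - a) / (INR n + 2) < b - a).
  { intro n. pose proof (pos_INR n). split; [apply Rdiv_lt_0_compat; lra|].
    apply Rmult_lt_reg_r with (INR n + 2); [lra|]. unfold Rdiv. rewrite Rmult_assoc, Rinv_l; nra. }
  split; [|split].
  - intro n. specialize (Hstep n). lra.
  - intro n. rewrite S_INR. pose proof (pos_INR n). apply Rplus_lt_compat_l.
    unfold Rdiv. apply Rmult_lt_compat_l; [lra|]. apply Rinv_lt_contravar; nra.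
  - apply Un_cv_bound with (b - a). intro n. specialize (Hstep n).
    replace (a + (b - a) / (INR n + 2) - a) with ((b - a) / (INR n + 2)) by ring.
    rewrite Rabs_right by lra. pose proof (pos_INR n).
    unfold Rdiv. apply Rmult_le_compat_l; [lra|]. apply Rinv_le_contravar; lra.
Qed.

Lemma Un_cv_from_below (a b : R) : a < b ->
  exists u : nat -> R, (forall n, a < u n < b) /\ (forall n, u n < u (S n)) /\ Un_cv u b.
Proof.
  intro Hab. destruct (Un_cv_from_above (- b) (- a)) as [u [Hu [Hdec Hcv]]]; [lra|].
  exists (fun n => - u n). split; [|split].
  - intro n. specialize (Hu n). lra.
  - intro n. specialize (Hdec n). lra.
  - replace b with (- - b) by ring. apply CV_opp. exact Hcv.
Qed.

Definition closed_in (a b : R) (S : R -> Prop) : Prop :=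
  forall u l, (forall n, a <= u n <= b /\ S (u n)) -> Un_cv u l -> S l.

Definition open_in (a b : R) (O : R -> Prop) : Prop :=
  forall s, a <= s <= b -> O s ->
    exists d, 0 < d /\ forall s', a <= s' <= b -> Rabs (s' - s) < d -> O s'.

Lemma open_in_sub (a b a' b' : R) (O : R -> Prop) : a <= a' -> b' <= b ->
  open_in a b O -> open_in a' b' O.
Proof.
  intros ha hb Ho s hs hO. destruct (Ho s ltac:(lra) hO) as [d [hd H]].
  exists d. split; auto. intros s' hs'. apply H. lra.
Qed.

Lemma closed_in_compl (a b : R) (O : R -> Prop) : open_in a b O -> closed_in a b (fun s => ~ O s).
Proof.
  intros Ho u l Hu Hc HOl.
  assert (Hl : a <= l <= b) by (apply (Un_cv_bounds u); auto; intro n; apply Hu).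
  destruct (Ho l Hl HOl) as [d [Hd H]].
  destruct (Hc d Hd) as [N HN].
  destruct (Hu N) as [HuN HnO]. apply HnO, H; auto. exact (HN N (le_n N)).
Qed.

Lemma sup_closed_in (a b : R) (A : R -> Prop) : a <= b -> A a -> closed_in a b A ->
  exists m, a <= m <= b /\ A m /\ forall s, m < s <= b -> ~ A s.
Proof.
  intros Hab Ha HA.
  set (E := fun s => a <= s <= b /\ A s).
  destruct (completeness E) as [m [Hub Hlub]].
  { exists b. intros x [Hx _]. lra. }
  { exists a. split; [lra|auto]. }
  assert (Ham : a <= m) by (apply Hub; split; [lra|auto]).
  assert (Hmb : m <= b) by (apply Hlub; intros x [Hx _]; lra).
  exists m. split; [lra|split].
  - destruct (Un_cv_from_below (m - 1) m) as [v [Hv [_ Hvcv]]]; [lra|].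
    assert (Happrox : forall n, exists s, E s /\ v n < s <= m).
    { intro n. apply NNPP. intro Hn.
      assert (m <= v n); [|specialize (Hv n); lra].
      apply Hlub. intros x Hx. apply Rnot_lt_le. intro Hlt.
      apply Hn. exists x. split; [exact Hx|]. split; [lra|apply Hub; exact Hx]. }
    destruct (choice _ Happrox) as [u Hu].
    apply (HA u m).
    + intro n. apply Hu.
    + intros e He. destruct (Hvcv e He) as [N HN]. exists N. intros n Hn.
      specialize (HN n Hn). specialize (Hu n). unfold Rdist in *.
      apply Rabs_def2 in HN. apply Rabs_def1; lra.
  - intros s Hs HAs. assert (s <= m) by (apply Hub; split; [lra|auto]). lra.
Qed.

Lemma closed_in_cover_meet (a b : R) (A B : R -> Prop) :
  a <= b -> A a -> B b -> (forall s, a <= s <= b -> A s \/ B s) ->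
  closed_in a b A -> closed_in a b B -> exists s, a <= s <= b /\ A s /\ B s.
Proof.
  intros Hab Ha Hb Hcov HA HB.
  destruct (sup_closed_in a b A Hab Ha HA) as [m [Hm [HAm Habove]]].
  destruct (Rle_lt_or_eq_dec m b (proj2 Hm)) as [Hlt|Heq]; [|subst m; eauto].
  exists m. split; [lra|split; auto].
  destruct (Un_cv_from_above m b Hlt) as [u [Hu [_ Hucv]]].
  apply (HB u m); auto. intro n. specialize (Hu n).
  split; [lra|]. destruct (Hcov (u n)) as [HA'|HB']; [lra| |auto].
  exfalso. apply (Habove (u n)); auto; lra.
Qed.

Lemma open_in_disjoint_not_cover (a b : R) (O1 O2 : R -> Prop) :
  a <= b -> O1 a -> O2 b -> (forall s, a <= s <= b -> O1 s -> O2 s -> False) ->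
  open_in a b O1 -> open_in a b O2 -> exists s, a <= s <= b /\ ~ O1 s /\ ~ O2 s.
Proof.
  intros Hab H1 H2 Hd Ho1 Ho2.
  destruct (closed_in_cover_meet a b (fun s => ~ O2 s) (fun s => ~ O1 s))
    as [s [Hs [h2 h1]]]; auto using closed_in_compl.
  - intro h. apply (Hd a); auto; lra.
  - intro h. apply (Hd b); auto; lra.
  - intros s Hs. destruct (classic (O1 s)); auto. left. intro. apply (Hd s); auto.
  - eauto.
Qed.

(** * The consumption set *)

Ltac unfold_Z := unfold inZ, ltZ in *; simpl in *.

Definition near (d : R) (x y : R * R) : Prop :=
  Rabs (fst y - fst x) < d /\ Rabs (snd y - snd x) < d.

Lemma near_le d d' x y : d <= d' -> near d x y -> near d' x y.
Proof. unfold near. lra. Qed.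

Lemma near_shift_t d t q h : - d < h < d -> near d (t, q) (t + h, q).
Proof.
  intro Hh. unfold near; simpl. replace (t + h - t) with h by ring.
  rewrite Rminus_diag, Rabs_R0. split; [apply Rabs_def1|]; lra.
Qed.

Lemma near_shift_q d t q h : - d < h < d -> near d (t, q) (t, q + h).
Proof.
  intro Hh. unfold near; simpl. replace (q + h - q) with h by ring.
  rewrite Rminus_diag, Rabs_R0. split; [|apply Rabs_def1]; lra.
Qed.

Lemma closedZ_compl_open (S : R * R -> Prop) x : closedZ S -> inZ x -> ~ S x ->
  exists d, 0 < d /\ forall y, inZ y -> near d x y -> ~ S y.
Proof.
  intros Hc hx hn. apply NNPP. intro Hno.
  assert (Hex : forall n : nat, exists y, inZ y /\ near (/ (INR n + 1)) x y /\ S y).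
  { intro n. apply NNPP. intro Hn. apply Hno. exists (/ (INR n + 1)). split.
    - apply Rinv_0_lt_compat. pose proof (pos_INR n); lra.
    - intros y hy hnear hS. apply Hn. exists y. auto. }
  destruct (choice _ Hex) as [u Hu].
  apply hn, (Hc u x); auto.
  - intro n. split; apply Hu.
  - split; apply Un_cv_bound with 1; intro n; destruct (Hu n) as [_ [[h1 h2] _]];
      unfold Rdiv; rewrite Rmult_1_l; left; auto.
Qed.

Definition segment (a b : R * R) (s : R) : R * R :=
  (fst a + s * (fst b - fst a), snd a + s * (snd b - snd a)).

Lemma segment0 a b : segment a b 0 = a.
Proof. destruct a; unfold segment; simpl; f_equal; ring. Qed.

Lemma segment1 a b : segment a b 1 = b.
Proof. destruct a, b; unfold segment; simpl; f_equal; ring. Qed.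

Lemma segment_inZ a b s : inZ a -> inZ b -> 0 <= s <= 1 -> inZ (segment a b s).
Proof.
  destruct a as [ta qa], b as [tb qb]. unfold inZ, segment; simpl. intros h1 h2 hs.
  repeat split; nra.
Qed.

Lemma segment_cv a b u l : Un_cv u l -> cvZ (fun n => segment a b (u n)) (segment a b l).
Proof.
  intro h. unfold cvZ, segment; simpl.
  split; apply CV_plus; auto using Un_cv_const; apply CV_mult; auto using Un_cv_const.
Qed.

Definition openZ (O : R * R -> Prop) : Prop :=
  forall w, inZ w -> O w -> exists d, 0 < d /\ forall w', inZ w' -> near d w w' -> O w'.

Lemma openZ_segment O a b : openZ O -> inZ a -> inZ b -> open_in 0 1 (fun s => O (segment a b s)).
Proof.
  intros ho ha hb s hs hO.
  destruct (ho _ (segment_inZ a b s ha hb hs) hO) as [d [hd H]].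
  set (K := Rabs (fst b - fst a) + Rabs (snd b - snd a) + 1).
  pose proof (Rabs_pos (fst b - fst a)). pose proof (Rabs_pos (snd b - snd a)).
  assert (hK : 0 < K) by (unfold K; lra).
  exists (d / K). split; [apply Rdiv_lt_0_compat; lra|].
  intros s' hs' hd'. apply H; [apply segment_inZ; auto|].
  assert (Hscale : forall c, Rabs c <= K -> Rabs ((s' - s) * c) < d).
  { intros c hc. rewrite Rabs_mult.
    assert (Rabs (s' - s) * K < d).
    { apply Rmult_lt_reg_r with (/ K); [apply Rinv_0_lt_compat; lra|].
      rewrite Rmult_assoc, Rinv_r, Rmult_1_r; [exact hd'|lra]. }
    pose proof (Rabs_pos (s' - s)). nra. }
  unfold near, segment; simpl. split.
  - replace (fst a + s' * (fst b - fst a) - (fst a + s * (fst b - fst a)))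
      with ((s' - s) * (fst b - fst a)) by ring. apply Hscale. unfold K. lra.
  - replace (snd a + s' * (snd b - snd a) - (snd a + s * (snd b - snd a)))
      with ((s' - s) * (snd b - snd a)) by ring. apply Hscale. unfold K. lra.
Qed.

(** * Classical preferences *)

Lemma strictP_weak (P : Pref) x y : strictP P x y -> P x y.
Proof. intros [h _]; exact h. Qed.

Lemma strictP_asym (P : Pref) x y : strictP P x y -> P y x -> False.
Proof. intros [_ h] h'; auto. Qed.

Lemma indiff_sym (P : Pref) x y : indiff P x y -> indiff P y x.
Proof. intros [a b]; split; auto. Qed.

Section ClassicalPreference.

Variable P : Pref.
Hypothesis HP : classical P.

Lemma pref_inZ x y : P x y -> inZ x /\ inZ y.
Proof. destruct HP as [h _]. auto. Qed.

Lemma pref_total x y : inZ x -> inZ y -> P x y \/ P y x.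
Proof. destruct HP as [_ [h _]]. auto. Qed.

Lemma pref_refl x : inZ x -> P x x.
Proof. intro hx. destruct (pref_total x x hx hx); auto. Qed.

Lemma pref_trans x y z : P x y -> P y z -> P x z.
Proof. destruct HP as [_ [_ [h _]]]. eauto. Qed.

Lemma strict_pref_cheaper t t' q : inZ (t, q) -> inZ (t', q) -> t < t' -> strictP P (t, q) (t', q).
Proof. destruct HP as [_ [_ [_ [h _]]]]. auto. Qed.

Lemma strict_pref_more t q q' : inZ (t, q) -> inZ (t, q') -> q < q' -> strictP P (t, q') (t, q).
Proof. destruct HP as [_ [_ [_ [_ [h _]]]]]. auto. Qed.

Lemma upper_contour_closed z : inZ z -> closedZ (fun x => inZ x /\ P x z).
Proof. destruct HP as [_ [_ [_ [_ [_ h]]]]]. intro hz. apply h; auto. Qed.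

Lemma lower_contour_closed z : inZ z -> closedZ (fun x => inZ x /\ P z x).
Proof. destruct HP as [_ [_ [_ [_ [_ h]]]]]. intro hz. apply h; auto. Qed.

Lemma not_pref_strict x y : inZ x -> inZ y -> ~ P x y -> strictP P y x.
Proof. intros hx hy hn. split; auto. destruct (pref_total x y hx hy); tauto. Qed.

Lemma strict_pref_trans x y z : strictP P x y -> P y z -> strictP P x z.
Proof.
  intros [h1 h2] h3. split; [eapply pref_trans; eauto|].
  intro h4. apply h2. eapply pref_trans; eauto.
Qed.

Lemma pref_strict_trans x y z : P x y -> strictP P y z -> strictP P x z.
Proof.
  intros h1 [h2 h3]. split; [eapply pref_trans; eauto|].
  intro h4. apply h3. eapply pref_trans; eauto.
Qed.

Lemma strict_pref_dominating t q t' q' : inZ (t, q) -> inZ (t', q') -> t <= t' -> q' <= q ->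
  (t, q) <> (t', q') -> strictP P (t, q) (t', q').
Proof.
  intros h1 h2 ht hq hne.
  assert (hm : inZ (t, q')) by (unfold_Z; lra).
  destruct (Rle_lt_or_eq_dec _ _ ht) as [ht'|ht']; destruct (Rle_lt_or_eq_dec _ _ hq) as [hq'|hq'];
    subst; auto using strict_pref_cheaper, strict_pref_more; [|congruence].
  apply strict_pref_trans with (t, q'); auto using strict_pref_more.
  apply strictP_weak, strict_pref_cheaper; auto.
Qed.

Lemma strict_worse_open x z : inZ z -> strictP P z x -> forall g, 0 < g ->
  exists e, 0 < e < g /\ forall y, inZ y -> near e x y -> strictP P z y.
Proof.
  intros hz hs g hg.
  assert (hx : inZ x) by apply (pref_inZ z x (strictP_weak _ _ _ hs)).
  destruct (closedZ_compl_open _ x (upper_contour_closed z hz) hx) as [d [hd Hd]].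
  { intros [_ h]. exact (strictP_asym _ _ _ hs h). }
  exists (Rmin d (g / 2)). split; [split; [apply Rmin_pos|pose proof (Rmin_r d (g / 2))]; lra|].
  intros y hy hn. apply not_pref_strict; auto.
  intro h. apply (Hd y hy); [|split; auto]. eapply near_le; [apply Rmin_l|exact hn].
Qed.

Lemma strict_better_open x z : inZ z -> strictP P x z -> forall g, 0 < g ->
  exists e, 0 < e < g /\ forall y, inZ y -> near e x y -> strictP P y z.
Proof.
  intros hz hs g hg.
  assert (hx : inZ x) by apply (pref_inZ x z (strictP_weak _ _ _ hs)).
  destruct (closedZ_compl_open _ x (lower_contour_closed z hz) hx) as [d [hd Hd]].
  { intros [_ h]. exact (strictP_asym _ _ _ hs h). }
  exists (Rmin d (g / 2)). split; [split; [apply Rmin_pos|pose proof (Rmin_r d (g / 2))]; lra|].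
  intros y hy hn. apply not_pref_strict; auto.
  intro h. apply (Hd y hy); [|split; auto]. eapply near_le; [apply Rmin_l|exact hn].
Qed.

Lemma pref_limit_l z u a : inZ z -> (forall n, P (u n) z) -> inZ a -> cvZ u a -> P a z.
Proof.
  intros hz hu ha hc. refine (proj2 (upper_contour_closed z hz u a _ ha hc)).
  intro n. split; [apply (pref_inZ _ z (hu n))|]. split; auto. apply (pref_inZ _ z (hu n)).
Qed.

Lemma pref_limit_r z u a : inZ z -> (forall n, P z (u n)) -> inZ a -> cvZ u a -> P z a.
Proof.
  intros hz hu ha hc. refine (proj2 (lower_contour_closed z hz u a _ ha hc)).
  intro n. split; [apply (pref_inZ z _ (hu n))|]. split; auto. apply (pref_inZ z _ (hu n)).
Qed.

Lemma pref_ivt a b c : inZ a -> inZ b -> inZ c -> strictP P a c -> strictP P c b ->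
  exists s, 0 < s < 1 /\ indiff P (segment a b s) c.
Proof.
  intros ha hb hc hac hcb.
  assert (Hlim : forall u l, (forall n, 0 <= u n <= 1) -> Un_cv u l ->
            0 <= l <= 1 /\ inZ (segment a b l) /\ cvZ (fun n => segment a b (u n)) (segment a b l)).
  { intros u l hu hl. assert (hl' := Un_cv_bounds u l 0 1 hu hl).
    auto using segment_inZ, segment_cv. }
  destruct (closed_in_cover_meet 0 1 (fun s => P (segment a b s) c) (fun s => P c (segment a b s)))
    as [s [hs [h1 h2]]].
  - lra.
  - rewrite segment0. apply strictP_weak; auto.
  - rewrite segment1. apply strictP_weak; auto.
  - intros s hs. apply pref_total; auto using segment_inZ.
  - intros u l hu hl. destruct (Hlim u l) as [_ [hin hcv]]; [apply hu|auto|].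
    apply (pref_limit_l c (fun n => segment a b (u n))); auto. apply hu.
  - intros u l hu hl. destruct (Hlim u l) as [_ [hin hcv]]; [apply hu|auto|].
    apply (pref_limit_r c (fun n => segment a b (u n))); auto. apply hu.
  - exists s. split; [|split; auto].
    destruct (Rle_lt_or_eq_dec _ _ (proj1 hs)) as [h0|h0];
      [|subst s; rewrite segment0 in h2; destruct (strictP_asym _ _ _ hac h2)].
    destruct (Rle_lt_or_eq_dec _ _ (proj2 hs)) as [h3|h3];
      [|subst s; rewrite segment1 in h1; destruct (strictP_asym _ _ _ hcb h1)].
    lra.
Qed.

Lemma pref_ivt_t t0 t1 q c : inZ (t0, q) -> inZ (t1, q) -> inZ c -> t0 < t1 ->
  strictP P (t0, q) c -> strictP P c (t1, q) -> exists t, t0 < t < t1 /\ indiff P (t, q) c.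
Proof.
  intros h0 h1 hc ht h0c hc1.
  destruct (pref_ivt _ _ c h0 h1 hc h0c hc1) as [s [hs hi]].
  exists (t0 + s * (t1 - t0)). split; [nra|].
  unfold segment in hi; simpl in hi. replace (q + s * (q - q)) with q in hi by ring. exact hi.
Qed.

End ClassicalPreference.

(** * Single crossing makes [prec] total *)

(* A strict local witness against [prec X Y]. *)
Definition reversal (X Y : Pref) (w : R * R) : Prop :=
  exists x, inZ x /\ ltZ x w /\ strictP Y x w /\ strictP X w x.

Definition level_reversal (X Y : Pref) (w : R * R) (q : R) : Prop :=
  exists t, 0 <= t < fst w /\ strictP Y (t, q) w /\ strictP X w (t, q).

Definition single_crossing_at (X Y : Pref) (w : R * R) : Prop :=
  forall y, indiff X y w -> indiff Y y w -> y = w.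

Lemma single_crossing_at_sym X Y w : single_crossing_at X Y w -> single_crossing_at Y X w.
Proof. intros h y h1 h2. apply h; auto. Qed.

Lemma single_crossing_at_all X Y w : classical X -> classical Y -> inZ w ->
  single_crossing X Y -> single_crossing_at X Y w.
Proof. intros hX hY hw hs y h1 h2. apply (hs w w y w); auto; split; apply pref_refl; auto. Qed.

Section Reversal.

Variables X Y : Pref.
Hypothesis hX : classical X.
Hypothesis hY : classical Y.

Lemma reversal_of_not_pref x w : inZ x -> inZ w -> ltZ x w -> Y x w -> ~ X x w -> reversal X Y w.
Proof.
  intros hx hw hlt hYx hXx. destruct x as [t q], w as [tw qw]. unfold ltZ in hlt; simpl in hlt.
  destruct (strict_worse_open X hX (t, q) (tw, qw) hw (not_pref_strict X hX _ _ hx hw hXx) (qw - q))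
    as [e [he H]]; [lra|].
  assert (hy : inZ (t, q + e / 2)) by (unfold_Z; lra).
  exists (t, q + e / 2). split; [auto|split; [unfold_Z; lra|split]].
  - apply strict_pref_trans with (t, q); auto. apply strict_pref_more; auto. lra.
  - apply H; auto. apply near_shift_q. lra.
Qed.

Lemma reversal_open : openZ (reversal X Y).
Proof.
  intros w hw [x [hx [hlt [h1 h2]]]]. unfold ltZ in hlt.
  destruct (strict_worse_open Y hY w x hx h1 1) as [d1 [hd1 H1]]; [lra|].
  destruct (strict_better_open X hX w x hx h2 1) as [d2 [hd2 H2]]; [lra|].
  set (d := Rmin (Rmin d1 d2) (Rmin (fst w - fst x) (snd w - snd x))).
  assert (hd : 0 < d) by (unfold d; repeat apply Rmin_pos; lra).
  assert (hd1' : d <= d1) by (unfold d; eapply Rle_trans; apply Rmin_l).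
  assert (hd2' : d <= d2) by (unfold d; eapply Rle_trans; [apply Rmin_l|apply Rmin_r]).
  assert (hdt : d <= fst w - fst x) by (unfold d; eapply Rle_trans; [apply Rmin_r|apply Rmin_l]).
  assert (hdq : d <= snd w - snd x) by (unfold d; eapply Rle_trans; apply Rmin_r).
  exists d. split; auto. intros w' hw' hn.
  exists x. split; [auto|split; [|split]].
  - destruct hn as [k1 k2]. apply Rabs_def2 in k1, k2. unfold ltZ. lra.
  - apply H1; auto. eapply near_le; eauto.
  - apply H2; auto. eapply near_le; eauto.
Qed.

Lemma level_reversal_open w : inZ w -> open_in 0 1 (level_reversal X Y w).
Proof.
  intros hw q hq [t [ht [h1 h2]]].
  destruct (strict_better_open Y hY (t, q) w hw h1 1) as [d1 [hd1 H1]]; [lra|].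
  destruct (strict_worse_open X hX (t, q) w hw h2 d1) as [d2 [hd2 H2]]; [lra|].
  exists d2. split; [lra|]. intros q' hq' hd. exists t. split; auto.
  assert (hz' : inZ (t, q')) by (unfold_Z; lra).
  assert (hn : near d2 (t, q) (t, q')).
  { replace q' with (q + (q' - q)) by ring. apply near_shift_q. apply Rabs_def2 in hd. lra. }
  split; [apply H1|apply H2]; auto. eapply near_le; [|exact hn]. lra.
Qed.

Lemma level_reversal_disjoint w q : 0 <= q <= 1 ->
  level_reversal X Y w q -> level_reversal Y X w q -> False.
Proof.
  intros hq [ta [hta [ha1 ha2]]] [tb [htb [hb1 hb2]]].
  assert (hza : inZ (ta, q)) by (unfold_Z; lra).
  assert (hzb : inZ (tb, q)) by (unfold_Z; lra).
  destruct (Rtotal_order ta tb) as [h|[h|h]].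
  - apply (strictP_asym _ _ _ ha2), strictP_weak, (strict_pref_trans X hX _ (tb, q)).
    + apply strict_pref_cheaper; auto.
    + apply strictP_weak; auto.
  - subst tb. exact (strictP_asym _ _ _ ha1 (strictP_weak _ _ _ hb2)).
  - apply (strictP_asym _ _ _ hb2), strictP_weak, (strict_pref_trans Y hY _ (ta, q)).
    + apply strict_pref_cheaper; auto.
    + apply strictP_weak; auto.
Qed.

(* Moving slightly along the level line would turn a failure of indifference
   into a level reversal. *)
Lemma indiff_of_no_level_reversal w t q : inZ w -> inZ (t, q) -> 0 < t < fst w ->
  indiff Y (t, q) w -> ~ level_reversal X Y w q -> ~ level_reversal Y X w q -> indiff X (t, q) w.
Proof.
  intros hw hz ht [hY1 hY2] hn1 hn2. split; apply NNPP; intro hn.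
  - destruct (strict_worse_open X hX (t, q) w hw (not_pref_strict X hX _ _ hz hw hn) t)
      as [e [he H]]; [lra|].
    apply hn1. exists (t - e / 2). split; [lra|].
    assert (hz' : inZ (t - e / 2, q)) by (unfold_Z; lra).
    split.
    + apply strict_pref_trans with (t, q); auto. apply strict_pref_cheaper; auto. lra.
    + apply H; auto. replace (t - e / 2) with (t + - (e / 2)) by ring. apply near_shift_t. lra.
  - destruct (strict_better_open X hX (t, q) w hw (not_pref_strict X hX _ _ hw hz hn) (fst w - t))
      as [e [he H]]; [lra|].
    apply hn2. exists (t + e / 2). split; [lra|].
    assert (hz' : inZ (t + e / 2, q)) by (unfold_Z; lra).
    split.
    + apply H; auto. apply near_shift_t. lra.
    + apply pref_strict_trans with (t, q); auto. apply strict_pref_cheaper; auto. lra.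
Qed.

(* The same, moving along the vertical line through [(t, q)]. *)
Lemma indiff_of_no_reversal w t q : inZ w -> 0 < t < fst w -> 0 < q < snd w ->
  indiff X (t, q) w -> ~ reversal X Y w -> ~ reversal Y X w -> indiff Y (t, q) w.
Proof.
  intros hw ht hq [hX1 hX2] hn1 hn2.
  assert (hz : inZ (t, q)) by (unfold_Z; lra).
  split; apply NNPP; intro hn.
  - destruct (strict_worse_open Y hY (t, q) w hw (not_pref_strict Y hY _ _ hz hw hn) (snd w - q))
      as [e [he H]]; [lra|].
    assert (hz' : inZ (t, q + e / 2)) by (unfold_Z; lra).
    apply hn2. exists (t, q + e / 2). split; [auto|split; [unfold_Z; lra|split]].
    + apply strict_pref_trans with (t, q); auto. apply strict_pref_more; auto. lra.
    + apply H; auto. apply near_shift_q. lra.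
  - destruct (strict_better_open Y hY (t, q) w hw (not_pref_strict Y hY _ _ hw hz hn) q)
      as [e [he H]]; [lra|].
    assert (hz' : inZ (t, q - e / 2)) by (unfold_Z; lra).
    apply hn1. exists (t, q - e / 2). split; [auto|split; [unfold_Z; lra|split]].
    + apply H; auto. replace (q - e / 2) with (q + - (e / 2)) by ring. apply near_shift_q. lra.
    + apply pref_strict_trans with (t, q); auto. apply strict_pref_more; auto. lra.
Qed.

End Reversal.

(* Between the levels [q1] and [q2] some level [qs] carries no level reversal;
   on it the [Y]-indifference point to [w] is also [X]-indifferent. *)
Lemma level_reversals_ordered X Y w q1 q2 : classical X -> classical Y -> inZ w ->
  single_crossing_at X Y w ->
  level_reversal X Y w q1 -> level_reversal Y X w q2 -> 0 <= q1 -> q1 <= q2 -> q2 < snd w -> False.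
Proof.
  intros hX hY hw hsc hr1 hr2 hq1 hq12 hq2. destruct w as [tw qw]; simpl in hq2.
  assert (hqw : qw <= 1) by (unfold_Z; lra).
  destruct (open_in_disjoint_not_cover q1 q2 (level_reversal X Y (tw, qw)) (level_reversal Y X (tw, qw)))
    as [qs [hqs [hn1 hn2]]]; auto.
  - intros s hs h1 h2. exact (level_reversal_disjoint X Y hX hY _ s ltac:(lra) h1 h2).
  - apply open_in_sub with 0 1; try lra. apply level_reversal_open; auto.
  - apply open_in_sub with 0 1; try lra. apply level_reversal_open; auto.
  - destruct hr1 as [t1 [ht1 [h1 _]]]; simpl in ht1.
    assert (hz1 : inZ (t1, qs)) by (unfold_Z; lra).
    assert (hzw : inZ (tw, qs)) by (unfold_Z; lra).
    assert (ha : strictP Y (t1, qs) (tw, qw)).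
    { destruct (Rle_lt_or_eq_dec _ _ (proj1 hqs)) as [h|h]; [|subst qs; auto].
      assert (hz1' : inZ (t1, q1)) by (unfold_Z; lra).
      apply (strict_pref_trans Y hY _ (t1, q1)); [apply strict_pref_more; auto|apply strictP_weak; auto]. }
    assert (hb : strictP Y (tw, qw) (tw, qs)) by (apply strict_pref_more; auto; lra).
    destruct (pref_ivt_t Y hY t1 tw qs (tw, qw)) as [ts [hts hiY]]; auto; [lra|].
    assert (hzs : inZ (ts, qs)) by (unfold_Z; lra).
    assert (hiX := indiff_of_no_level_reversal X Y hX hY (tw, qw) ts qs hw hzs ltac:(simpl; lra) hiY hn1 hn2).
    assert (Heq := hsc _ hiX hiY). injection Heq. lra.
Qed.


Lemma level_reversal_of_reversal X Y w : reversal X Y w ->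
  exists q, 0 <= q < snd w /\ level_reversal X Y w q.
Proof.
  intros [[t q] [hx [hlt [h1 h2]]]]. unfold ltZ in hlt; simpl in hlt.
  exists q. split; [unfold_Z; lra|]. exists t. split; [unfold_Z; lra|auto].
Qed.

Lemma reversal_not_both X Y w : classical X -> classical Y -> inZ w -> single_crossing_at X Y w ->
  reversal X Y w -> reversal Y X w -> False.
Proof.
  intros hX hY hw hsc h1 h2.
  destruct (level_reversal_of_reversal X Y w h1) as [q1 [hq1 hr1]].
  destruct (level_reversal_of_reversal Y X w h2) as [q2 [hq2 hr2]].
  destruct (Rle_or_lt q1 q2).
  - apply (level_reversals_ordered X Y w q1 q2 hX hY); auto; lra.
  - apply (level_reversals_ordered Y X w q2 q1 hY hX); auto using single_crossing_at_sym; lra.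
Qed.

(* The [X]-indifference curve through an interior [w] meets a level slightly below [w]
   at some [(ts, q0)]; without reversals the [Y]-curve would pass there too. *)
Lemma reversal_at_interior X Y w : classical X -> classical Y -> inZ w -> 0 < fst w -> 0 < snd w ->
  single_crossing_at X Y w -> reversal X Y w \/ reversal Y X w.
Proof.
  intros hX hY hw htw hqw hsc. apply NNPP. intro hn.
  destruct w as [tw qw]; simpl in *.
  assert (h0 : inZ (0, qw)) by (unfold_Z; lra).
  destruct (strict_better_open X hX (0, qw) (tw, qw) hw (strict_pref_cheaper X hX 0 tw qw h0 hw htw) qw)
    as [e [he H]]; [lra|].
  set (q0 := qw - e / 2).
  assert (hz0 : inZ (0, q0)) by (unfold q0; unfold_Z; lra).
  assert (hzt : inZ (tw, q0)) by (unfold q0; unfold_Z; lra).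
  assert (ha : strictP X (0, q0) (tw, qw)).
  { apply H; auto. unfold q0. replace (qw - e / 2) with (qw + - (e / 2)) by ring.
    apply near_shift_q. lra. }
  assert (hb : strictP X (tw, qw) (tw, q0)) by (apply strict_pref_more; auto; unfold q0; lra).
  destruct (pref_ivt_t X hX 0 tw q0 (tw, qw)) as [ts [hts hiX]]; auto.
  assert (hiY := indiff_of_no_reversal X Y hX hY (tw, qw) ts q0 hw ltac:(simpl; lra)
                   ltac:(unfold q0; simpl; lra) hiX ltac:(tauto) ltac:(tauto)).
  assert (Heq := hsc _ hiX hiY). injection Heq. lra.
Qed.

Lemma reversal_along_segment X Y u v : classical X -> classical Y -> single_crossing X Y ->
  inZ u -> inZ v -> 0 < fst u -> 0 < snd u -> 0 < fst v -> 0 < snd v ->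
  reversal X Y u -> reversal Y X v -> False.
Proof.
  intros hX hY hsc hu hv h1 h2 h3 h4 hr1 hr2.
  destruct (open_in_disjoint_not_cover 0 1 (fun s => reversal X Y (segment u v s))
              (fun s => reversal Y X (segment u v s))) as [s [hs [hn1 hn2]]];
    try rewrite segment0; try rewrite segment1; auto using openZ_segment, reversal_open; [lra| |].
  - intros s hs. apply reversal_not_both; auto using segment_inZ, single_crossing_at_all.
  - assert (hz := segment_inZ u v s hu hv hs).
    destruct (reversal_at_interior X Y (segment u v s)) as [h|h];
      auto using single_crossing_at_all; destruct u as [tu qu], v as [tv qv];
      unfold segment in *; simpl in *; nra.
Qed.

Lemma reversal_of_not_prec X Y : classical X -> classical Y -> X <> Y -> ~ prec X Y ->
  exists w, inZ w /\ 0 < fst w /\ 0 < snd w /\ reversal X Y w.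
Proof.
  intros hX hY hne hn. apply NNPP. intro hno. apply hn. split; auto.
  intros z hz x [hx hle] hYx. apply NNPP. intro hXx.
  destruct hle as [e|hlt].
  - subst x. apply hXx, pref_refl; auto.
  - apply hno. exists z. unfold ltZ in hlt. unfold inZ in hx.
    split; [auto|split; [lra|split; [lra|]]]. apply (reversal_of_not_pref X Y hX hY x z); auto.
Qed.

(* Two interior reversals in opposite directions are joined through the corner
   [(fst w1, snd w2)] by segments of interior points. *)
Lemma prec_total X Y : classical X -> classical Y -> single_crossing X Y -> X <> Y ->
  prec X Y \/ prec Y X.
Proof.
  intros hX hY hs hne. apply NNPP. intro hn.
  destruct (reversal_of_not_prec X Y hX hY hne) as [w1 [hw1 [a1 [b1 hr1]]]]; [tauto|].
  destruct (reversal_of_not_prec Y X hY hX (not_eq_sym hne)) as [w2 [hw2 [a2 [b2 hr2]]]]; [tauto|].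
  set (c := (fst w1, snd w2)).
  assert (hc : inZ c) by (unfold c; unfold_Z; lra).
  destruct (reversal_at_interior X Y c) as [h|h]; auto using single_crossing_at_all;
    try (unfold c; simpl; lra).
  - apply (reversal_along_segment X Y c w2); auto; unfold c; simpl; lra.
  - apply (reversal_along_segment X Y w1 c); auto; unfold c; simpl; lra.
Qed.

(** * Rich single-crossing domains *)

(* The segment from [(fst c, snd d)] to [(fst d, snd c)]: price rises and quantity
   falls along it, so every preference strictly ranks its points in order. *)
Definition antidiag (c d : R * R) (l : R) : R * R := segment (fst c, snd d) (fst d, snd c) l.

Lemma antidiag_inZ c d l : inZ c -> inZ d -> 0 <= l <= 1 -> inZ (antidiag c d l).
Proof. intros hc hd hl. apply segment_inZ; auto; unfold_Z; lra. Qed.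

Lemma antidiag_above c d l : ltZ c d -> 0 < l < 1 -> ltZ c (antidiag c d l).
Proof. unfold antidiag, segment, ltZ; simpl. intros h hl. split; nra. Qed.

Lemma antidiag_strict P c d l m : classical P -> inZ c -> inZ d -> ltZ c d ->
  0 <= l -> l < m -> m <= 1 -> strictP P (antidiag c d l) (antidiag c d m).
Proof.
  intros hP hc hd hlt h1 h2 h3.
  assert (hl : inZ (antidiag c d l)) by (apply antidiag_inZ; auto; lra).
  assert (hm : inZ (antidiag c d m)) by (apply antidiag_inZ; auto; lra).
  unfold antidiag, segment in *; simpl in *. unfold ltZ in hlt.
  apply strict_pref_dominating; auto; try nra.
  intro he. injection he. intros. nra.
Qed.

Lemma antidiag_indiff_exists X c d : classical X -> inZ c -> inZ d -> ltZ c d ->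
  exists l, 0 < l < 1 /\ indiff X c (antidiag c d l).
Proof.
  intros hX hc hd hlt. destruct c as [tc qc], d as [td qd]. unfold ltZ in hlt; simpl in hlt.
  assert (ha : inZ (tc, qd)) by (unfold_Z; lra).
  assert (hb : inZ (td, qc)) by (unfold_Z; lra).
  destruct (pref_ivt X hX (tc, qd) (td, qc) (tc, qc)) as [l [hl hi]]; auto.
  - apply strict_pref_more; auto. lra.
  - apply strict_pref_cheaper; auto. lra.
  - exists l. split; auto. apply indiff_sym. exact hi.
Qed.

Lemma prec_pref_up Y R' x z : classical Y -> classical R' -> inZ x -> inZ z -> ltZ x z ->
  prec Y R' -> Y z x -> R' z x.
Proof.
  intros hY hR hx hz hlt [_ hp] h.
  destruct x as [tx qx], z as [tz qz]. unfold ltZ in hlt; simpl in hlt.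
  destruct (Un_cv_from_above tx tz) as [u [hu [_ hucv]]]; [lra|].
  apply (pref_limit_r R' hR (tz, qz) (fun n => (u n, qx))); auto.
  - intro n. specialize (hu n).
    assert (hzn : inZ (u n, qx)) by (unfold_Z; lra).
    assert (hs : strictP Y (tz, qz) (u n, qx)).
    { apply (pref_strict_trans Y hY _ (tx, qx)); auto. apply strict_pref_cheaper; auto; lra. }
    destruct (pref_total R' hR (tz, qz) (u n, qx) hz hzn) as [k|k]; auto.
    exfalso. apply (strictP_asym _ _ _ hs). apply (hp (tz, qz) hz (u n, qx)); auto.
    split; auto. right. unfold_Z; lra.
  - split; simpl; auto using Un_cv_const.
Qed.

Section RichDomain.

Variable dom : Pref -> Prop.
Hypothesis Hdom : rich_single_crossing dom.

Lemma dom_classical X : dom X -> classical X.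
Proof. destruct Hdom as [h _]. auto. Qed.

Lemma dom_prec_total X Y : dom X -> dom Y -> X <> Y -> prec X Y \/ prec Y X.
Proof.
  destruct Hdom as [_ [hsc _]]. intros hX hY hne.
  apply prec_total; auto using dom_classical.
Qed.

Lemma dom_indiff_unique X Y x y : dom X -> dom Y -> inZ y -> ltZ x y ->
  indiff X x y -> indiff Y x y -> X = Y.
Proof.
  destruct Hdom as [_ [hsc _]]. intros hX hY hy hlt h1 h2. apply NNPP. intro hne.
  assert (hXy := pref_refl X (dom_classical X hX) y hy).
  assert (hYy := pref_refl Y (dom_classical Y hY) y hy).
  assert (e := hsc X Y hX hY hne y y x y h1 h2 (conj hXy hXy) (conj hYy hYy)).
  subst. unfold ltZ in hlt. lra.
Qed.

Lemma prec_of_pref_gap X Y x z : dom X -> dom Y -> inZ z -> ltZ x z ->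
  X x z -> ~ Y x z -> prec X Y.
Proof.
  intros hX hY hz hlt h1 h2.
  assert (hne : X <> Y) by (intro e; subst; auto).
  destruct (dom_prec_total X Y hX hY hne) as [h|[_ h]]; auto.
  exfalso. apply h2, (h z hz x); auto.
  split; [exact (proj1 (pref_inZ X (dom_classical X hX) x z h1))|right; auto].
Qed.

Section Antidiagonal.

Variables c d : R * R.
Hypothesis hc : inZ c.
Hypothesis hd : inZ d.
Hypothesis hcd : ltZ c d.

Lemma prec_of_antidiag_lt X Y m n : dom X -> dom Y -> 0 < m -> n < 1 -> m < n ->
  indiff X c (antidiag c d m) -> indiff Y c (antidiag c d n) -> prec X Y.
Proof.
  intros hX hY hm hn hmn hi1 hi2.
  apply (prec_of_pref_gap X Y c (antidiag c d m)); auto.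
  - apply antidiag_inZ; auto; lra.
  - apply antidiag_above; auto; lra.
  - apply hi1.
  - intro h. apply (strictP_asym Y (antidiag c d m) c); auto.
    apply (strict_pref_trans Y (dom_classical Y hY) _ (antidiag c d n)); [|apply hi2].
    apply antidiag_strict; auto using dom_classical; lra.
Qed.

Lemma antidiag_lt_of_prec X Y m n : dom X -> dom Y -> 0 < m < 1 -> 0 < n < 1 ->
  indiff X c (antidiag c d m) -> indiff Y c (antidiag c d n) -> prec X Y -> m < n.
Proof.
  intros hX hY hm hn hi1 hi2 [hne hp].
  destruct (Rtotal_order m n) as [h|[h|h]]; auto; exfalso.
  - subst n. apply hne, (dom_indiff_unique X Y c (antidiag c d m)); auto.
    + apply antidiag_inZ; auto; lra.
    + apply antidiag_above; auto.
  - apply (strictP_asym X (antidiag c d n) c).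
    + apply (strict_pref_trans X (dom_classical X hX) _ (antidiag c d m)); [|apply hi1].
      apply antidiag_strict; auto using dom_classical; lra.
    + apply (hp (antidiag c d n)); [apply antidiag_inZ; auto; lra| |apply hi2].
      split; [apply hc|right; apply antidiag_above; auto].
Qed.

(* The member of the domain indifferent between [c] and [antidiag c d l]; richness
   makes it exist for [0 < l < 1], and single crossing makes it unique. *)
Definition antidiag_pref (l : R) : Pref :=
  epsilon (inhabits (fun _ _ => True)) (fun P => dom P /\ indiff P c (antidiag c d l)).

Lemma antidiag_pref_spec l : 0 < l < 1 -> dom (antidiag_pref l) /\ indiff (antidiag_pref l) c (antidiag c d l).
Proof.
  intro hl. apply (epsilon_spec _ (fun P => dom P /\ indiff P c (antidiag c d l))).
  destruct Hdom as [_ [_ hrich]].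
  apply hrich; auto; [apply antidiag_inZ; auto; lra|apply antidiag_above; auto].
Qed.

Lemma antidiag_pref_eq X l : dom X -> 0 < l < 1 -> indiff X c (antidiag c d l) -> antidiag_pref l = X.
Proof.
  intros hX hl hi. destruct (antidiag_pref_spec l hl) as [hP hPi].
  apply (dom_indiff_unique _ X c (antidiag c d l)); auto.
  - apply antidiag_inZ; auto; lra.
  - apply antidiag_above; auto.
Qed.

Lemma antidiag_pref_prec a b : 0 < a -> a < b -> b < 1 -> prec (antidiag_pref a) (antidiag_pref b).
Proof.
  intros ha hab hb. destruct (antidiag_pref_spec a) as [k1 k2]; [lra|].
  destruct (antidiag_pref_spec b) as [k3 k4]; [lra|].
  apply (prec_of_antidiag_lt _ _ a b); auto.
Qed.

Lemma antidiag_pref_order_cv (D : Pref -> Prop) (u : nat -> R) (s : R) : (forall X, D X -> dom X) ->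
  (forall n, 0 < u n < 1) -> 0 < s < 1 -> Un_cv u s ->
  order_cv D (fun n => antidiag_pref (u n)) (antidiag_pref s).
Proof.
  intros hD hu hs hcv. destruct (antidiag_pref_spec s hs) as [hPs hPsi].
  split.
  - intros A hA hpA. assert (hdA := hD A hA).
    destruct (antidiag_indiff_exists A c d (dom_classical A hdA) hc hd hcd) as [m [hm him]].
    assert (hms : m < s) by (apply (antidiag_lt_of_prec A (antidiag_pref s) m s); auto).
    destruct (hcv (s - m)) as [N HN]; [lra|]. exists N. intros n hn.
    specialize (HN n hn). unfold Rdist in HN. apply Rabs_def2 in HN.
    destruct (antidiag_pref_spec (u n) (hu n)) as [k1 k2].
    specialize (hu n). apply (prec_of_antidiag_lt A _ m (u n)); auto; lra.
  - intros B hB hpB. assert (hdB := hD B hB).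
    destruct (antidiag_indiff_exists B c d (dom_classical B hdB) hc hd hcd) as [m [hm him]].
    assert (hms : s < m) by (apply (antidiag_lt_of_prec (antidiag_pref s) B s m); auto).
    destruct (hcv (m - s)) as [N HN]; [lra|]. exists N. intros n hn.
    specialize (HN n hn). unfold Rdist in HN. apply Rabs_def2 in HN.
    destruct (antidiag_pref_spec (u n) (hu n)) as [k1 k2].
    specialize (hu n). apply (prec_of_antidiag_lt _ B (u n) m); auto; lra.
Qed.

End Antidiagonal.

Lemma prec_asym X Y : dom X -> dom Y -> prec X Y -> prec Y X -> False.
Proof.
  intros hX hY h1 h2.
  assert (hc : inZ (0, 0)) by (unfold_Z; lra).
  assert (hd : inZ (1, 1)) by (unfold_Z; lra).
  assert (hcd : ltZ (0, 0) (1, 1)) by (unfold_Z; lra).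
  destruct (antidiag_indiff_exists X _ _ (dom_classical X hX) hc hd hcd) as [m [hm hi1]].
  destruct (antidiag_indiff_exists Y _ _ (dom_classical Y hY) hc hd hcd) as [n [hn hi2]].
  pose proof (antidiag_lt_of_prec _ _ hc hd hcd X Y m n hX hY hm hn hi1 hi2 h1).
  pose proof (antidiag_lt_of_prec _ _ hc hd hcd Y X n m hY hX hn hm hi2 hi1 h2).
  lra.
Qed.

Lemma prec_trans X Y Z : dom X -> dom Y -> dom Z -> prec X Y -> prec Y Z -> prec X Z.
Proof.
  intros hX hY hZ [n1 h1] [n2 h2]. split.
  - intro e. subst Z. apply (prec_asym X Y); auto; split; auto.
  - intros z hz x hb h. apply h1; auto.
Qed.

Lemma precsim_trans X Y Z : dom X -> dom Y -> dom Z -> precsim X Y -> precsim Y Z -> precsim X Z.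
Proof.
  unfold precsim. intros hX hY hZ [h1|h1] [h2|h2]; subst; auto.
  left. apply (prec_trans X Y Z); auto.
Qed.

End RichDomain.

(** * Monotone mechanisms with continuous [V^F] *)

Lemma cvZ_const_eq (u : nat -> R * R) e L : (forall n, u n = e) -> cvZ u L -> L = e.
Proof.
  intros hu [h1 h2]. destruct L as [l1 l2], e as [e1 e2]. simpl in *. f_equal.
  - apply (UL_sequence (fun _ => e1)); auto using Un_cv_const.
    apply (Un_cv_ext (fun n => fst (u n))); auto. intro n. rewrite hu. reflexivity.
  - apply (UL_sequence (fun _ => e2)); auto using Un_cv_const.
    apply (Un_cv_ext (fun n => snd (u n))); auto. intro n. rewrite hu. reflexivity.
Qed.

Lemma leZ_ltZ_false a b : leZ a b -> ltZ b a -> False.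
Proof. unfold leZ, ltZ. intros [e|h] h'; [subst|]; lra. Qed.

Lemma filter_length_le {A} (p q : A -> bool) l : (forall x, p x = true -> q x = true) ->
  (length (filter p l) <= length (filter q l))%nat.
Proof.
  intro H. induction l as [|a l IH]; simpl; auto.
  destruct (p a) eqn:e1; destruct (q a) eqn:e2; simpl; try lia.
  rewrite (H a e1) in e2. discriminate.
Qed.

Lemma filter_length_lt {A} (p q : A -> bool) l e : (forall x, p x = true -> q x = true) ->
  In e l -> p e = false -> q e = true -> (length (filter p l) < length (filter q l))%nat.
Proof.
  intros H hin hp hq. induction l as [|a l IH]; simpl in *; [contradiction|].
  destruct hin as [h|h].
  - subst a. rewrite hp, hq. simpl. pose proof (filter_length_le p q l H). lia.
  - specialize (IH h). destruct (p a) eqn:e1; destruct (q a) eqn:e2; simpl; try lia.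
    rewrite (H a e1) in e2. discriminate.
Qed.

Definition count_between (l : list (R * R)) (c d : R * R) : nat :=
  length (filter (fun e => if excluded_middle_informative (ltZ c e /\ ltZ e d) then true else false) l).

Lemma count_between_lt_left l c d e : In e l -> ltZ c e -> ltZ e d ->
  (count_between l c e < count_between l c d)%nat.
Proof.
  unfold ltZ. intros hin h1 h2. apply filter_length_lt with e; auto.
  - intro x. do 2 destruct excluded_middle_informative; auto; unfold ltZ in *; lra.
  - destruct excluded_middle_informative; unfold ltZ in *; auto; lra.
  - destruct excluded_middle_informative; unfold ltZ in *; auto; lra.
Qed.

Lemma count_between_lt_right l c d e : In e l -> ltZ c e -> ltZ e d ->
  (count_between l e d < count_between l c d)%nat.
Proof.
  unfold ltZ. intros hin h1 h2. apply filter_length_lt with e; auto.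
  - intro x. do 2 destruct excluded_middle_informative; auto; unfold ltZ in *; lra.
  - destruct excluded_middle_informative; unfold ltZ in *; auto; lra.
  - destruct excluded_middle_informative; unfold ltZ in *; auto; lra.
Qed.

Section Mechanism.

Variable dom : Pref -> Prop.
Hypothesis Hdom : rich_single_crossing dom.
Variable D : Pref -> Prop.
Variable F : Pref -> R * R.
Hypothesis hD : forall X, D X -> dom X.
Hypothesis hconv : forall X Y Z, D X -> D Y -> dom Z -> precsim X Z -> precsim Z Y -> D Z.
Hypothesis hmech : mechanism D F.
Hypothesis hmono : monotone_mech D F.
Hypothesis hcont : VF_continuous D F.

Lemma prec_of_outcome_lt X Y : D X -> D Y -> ltZ (F X) (F Y) -> prec X Y.
Proof.
  intros hX hY hlt.
  assert (hne : X <> Y) by (intro e; subst; unfold ltZ in hlt; lra).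
  destruct (dom_prec_total dom Hdom X Y (hD X hX) (hD Y hY) hne) as [h|h]; auto.
  exfalso. exact (leZ_ltZ_false _ _ (hmono Y X hY hX h) hlt).
Qed.

Section AdjacentOutcomes.

(* No outcome of [F] lies strictly between [F R1] and [F R2]; [l0] and [l1] locate
   [R1] and [R2] on the antidiagonal of the box between these outcomes. *)
Variables R1 R2 : Pref.
Hypothesis hR1 : D R1.
Hypothesis hR2 : D R2.
Hypothesis hlt : ltZ (F R1) (F R2).
Hypothesis hgap : forall Y, D Y -> ~ (ltZ (F R1) (F Y) /\ ltZ (F Y) (F R2)).
Variables l0 l1 : R.
Hypothesis hl0 : 0 < l0.
Hypothesis hl01 : l0 < l1.
Hypothesis hl1 : l1 < 1.

Let c := F R1.
Let d := F R2.
Let P := antidiag_pref dom c d.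

Hypothesis hP0 : P l0 = R1.
Hypothesis hP1 : P l1 = R2.

Let hc : inZ c := hmech R1 hR1.
Let hd : inZ d := hmech R2 hR2.

Lemma path_spec a : l0 <= a <= l1 -> dom (P a) /\ indiff (P a) c (antidiag c d a).
Proof. intro ha. apply antidiag_pref_spec; auto. lra. Qed.

Lemma path_prec a b : l0 <= a -> a < b -> b <= l1 -> prec (P a) (P b).
Proof. intros. apply antidiag_pref_prec; auto; lra. Qed.

Lemma path_in_D a : l0 <= a <= l1 -> D (P a).
Proof.
  intro ha.
  destruct (Rle_lt_or_eq_dec _ _ (proj1 ha)) as [h|h]; [|subst a; rewrite hP0; auto].
  destruct (Rle_lt_or_eq_dec _ _ (proj2 ha)) as [h'|h']; [|subst a; rewrite hP1; auto].
  apply (hconv R1 R2); [auto|auto|apply path_spec; lra|left|left].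
  - rewrite <- hP0. apply path_prec; lra.
  - rewrite <- hP1. apply path_prec; lra.
Qed.

Lemma path_mono a b : l0 <= a -> a <= b -> b <= l1 -> leZ (F (P a)) (F (P b)).
Proof.
  intros h1 h2 h3. destruct (Rle_lt_or_eq_dec _ _ h2) as [h|h]; [|subst b; left; reflexivity].
  apply hmono; try apply path_in_D; try lra. apply path_prec; lra.
Qed.

Lemma path_two_valued a : l0 <= a <= l1 -> F (P a) = c \/ F (P a) = d.
Proof.
  intros ha.
  destruct (path_mono l0 a) as [e|k1]; try lra; [rewrite hP0 in e; auto|].
  destruct (path_mono a l1) as [e|k2]; try lra; [rewrite hP1 in e; auto|].
  rewrite hP0 in k1. rewrite hP1 in k2. destruct (hgap (P a)); auto. apply path_in_D; auto.
Qed.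

Lemma path_one_sided_limit (u : nat -> R) s e : (forall n, l0 <= u n <= l1) -> l0 <= s <= l1 ->
  ((forall n, u n < u (S n)) \/ (forall n, u (S n) < u n)) -> Un_cv u s ->
  (forall n, F (P (u n)) = e) -> indiff (P s) e (F (P s)).
Proof.
  intros hu hs hmu hcv hFe.
  destruct (hcont (P s) (fun n => P (u n))) as [L [hL [hcvL hiL]]].
  - apply path_in_D; auto.
  - intro n. apply path_in_D; auto.
  - destruct hmu as [h|h]; [left|right]; intro n; left; apply path_prec; try apply hu; auto.
  - apply antidiag_pref_order_cv; auto; [intro n; specialize (hu n)|]; lra.
  - rewrite <- (cvZ_const_eq _ e L hFe hcvL). exact hiL.
Qed.

Lemma path_threshold : exists s, l0 <= s <= l1 /\
  (forall a, l0 <= a < s -> F (P a) = c) /\ (forall a, s < a <= l1 -> F (P a) = d).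
Proof.
  set (E := fun a => l0 <= a <= l1 /\ F (P a) = c).
  destruct (completeness E) as [s [hub hlub]].
  { exists l1. intros x [hx _]. lra. }
  { exists l0. split; [lra|rewrite hP0; reflexivity]. }
  assert (hs0 : l0 <= s) by (apply hub; split; [lra|rewrite hP0; reflexivity]).
  assert (hs1 : s <= l1) by (apply hlub; intros x [hx _]; lra).
  exists s. split; [lra|split].
  - intros a ha. apply NNPP. intro hn.
    assert (s <= a); [|lra]. apply hlub. intros x [hx hFx]. apply Rnot_lt_le. intro hax.
    destruct (path_mono l0 a) as [e|k1]; try lra; [rewrite hP0 in e; auto|].
    rewrite hP0 in k1. apply (leZ_ltZ_false _ _ (path_mono a x ltac:(lra) ltac:(lra) ltac:(lra))).
    rewrite hFx. exact k1.
  - intros a ha. destruct (path_two_valued a) as [h|h]; [lra| |auto].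
    assert (a <= s) by (apply hub; split; [lra|auto]). lra.
Qed.

Lemma path_jump_indiff : exists s, l0 <= s <= l1 /\ indiff (P s) c d.
Proof.
  destruct path_threshold as [s [hs [hleft hright]]].
  assert (hcs : classical (P s)) by (apply (dom_classical dom Hdom), path_spec; lra).
  assert (Hc : indiff (P s) c (F (P s))).
  { destruct (Rle_lt_or_eq_dec _ _ (proj1 hs)) as [h|h].
    - destruct (Un_cv_from_below l0 s h) as [u [hu [hinc hcv]]].
      apply (path_one_sided_limit u); auto; try lra.
      + intro n. specialize (hu n). lra.
      + intro n. apply hleft. specialize (hu n). lra.
    - subst s. rewrite hP0 in hcs |- *. split; apply pref_refl; auto. }
  assert (Hd : indiff (P s) d (F (P s))).
  { destruct (Rle_lt_or_eq_dec _ _ (proj2 hs)) as [h|h].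
    - destruct (Un_cv_from_above s l1 h) as [u [hu [hdec hcv]]].
      apply (path_one_sided_limit u); auto; try lra.
      + intro n. specialize (hu n). lra.
      + intro n. apply hright. specialize (hu n). lra.
    - subst s. rewrite hP1 in hcs |- *. split; apply pref_refl; auto. }
  exists s. split; [lra|].
  destruct Hc as [a1 a2], Hd as [b1 b2]. split; eapply pref_trans; eauto.
Qed.

(* The type at the jump is indifferent between the two outcomes; types below it
   weakly prefer the lower outcome and types above it the higher one. *)
Lemma adjacent_no_envy_on_path : R1 c d /\ R2 d c.
Proof.
  destruct path_jump_indiff as [s [hs [hi1 hi2]]].
  destruct (path_spec s hs) as [hPs _].
  split.
  - destruct (Rle_lt_or_eq_dec _ _ (proj1 hs)) as [h|h]; [|subst s; rewrite hP0 in hi1; auto].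
    assert (hp : prec R1 (P s)) by (rewrite <- hP0; apply path_prec; lra).
    apply (proj2 hp d hd c); auto. split; [auto|right; auto].
  - destruct (Rle_lt_or_eq_dec _ _ (proj2 hs)) as [h|h]; [|subst s; rewrite hP1 in hi2; auto].
    assert (hp : prec (P s) R2) by (rewrite <- hP1; apply path_prec; lra).
    apply (prec_pref_up (P s) R2 c d); auto; apply (dom_classical dom Hdom); auto.
Qed.

End AdjacentOutcomes.

Lemma adjacent_no_envy R1 R2 : D R1 -> D R2 -> ltZ (F R1) (F R2) ->
  (forall Y, D Y -> ~ (ltZ (F R1) (F Y) /\ ltZ (F Y) (F R2))) ->
  R1 (F R1) (F R2) /\ R2 (F R2) (F R1).
Proof.
  intros hR1 hR2 hlt hgap.
  assert (hp := prec_of_outcome_lt R1 R2 hR1 hR2 hlt).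
  assert (hc := hmech R1 hR1). assert (hd := hmech R2 hR2).
  assert (hdR1 := hD R1 hR1). assert (hdR2 := hD R2 hR2).
  destruct (antidiag_indiff_exists R1 _ _ (dom_classical dom Hdom R1 hdR1) hc hd hlt) as [l0 [hl0 hi0]].
  destruct (antidiag_indiff_exists R2 _ _ (dom_classical dom Hdom R2 hdR2) hc hd hlt) as [l1 [hl1 hi1]].
  assert (hl01 : l0 < l1) by (apply (antidiag_lt_of_prec dom Hdom _ _ hc hd hlt R1 R2); auto).
  apply (adjacent_no_envy_on_path R1 R2 hR1 hR2 hlt hgap l0 l1); try lra;
    apply antidiag_pref_eq; auto.
Qed.

Lemma no_envy_trans R1 Y R2 : D R1 -> D Y -> D R2 -> ltZ (F R1) (F Y) -> ltZ (F Y) (F R2) ->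
  R1 (F R1) (F Y) /\ Y (F Y) (F R1) -> Y (F Y) (F R2) /\ R2 (F R2) (F Y) ->
  R1 (F R1) (F R2) /\ R2 (F R2) (F R1).
Proof.
  intros hR1 hY hR2 h1 h2 [a1 a2] [b1 b2].
  assert (hcY := dom_classical dom Hdom Y (hD Y hY)).
  split.
  - apply (pref_trans R1 (dom_classical dom Hdom R1 (hD R1 hR1)) _ (F Y)); [exact a1|].
    apply (proj2 (prec_of_outcome_lt R1 Y hR1 hY h1) (F R2) (hmech R2 hR2) (F Y)); auto.
    split; [apply hmech; auto|right; auto].
  - apply (pref_trans R2 (dom_classical dom Hdom R2 (hD R2 hR2)) _ (F Y)); [exact b2|].
    apply (prec_pref_up Y R2); auto using prec_of_outcome_lt.
    apply (dom_classical dom Hdom); auto.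
Qed.

Lemma no_envy_of_outcome_lt (l : list (R * R)) : (forall X, D X -> In (F X) l) ->
  forall R1 R2, D R1 -> D R2 -> ltZ (F R1) (F R2) -> R1 (F R1) (F R2) /\ R2 (F R2) (F R1).
Proof.
  intros hl.
  assert (H : forall n R1 R2, D R1 -> D R2 -> ltZ (F R1) (F R2) ->
            (count_between l (F R1) (F R2) <= n)%nat -> R1 (F R1) (F R2) /\ R2 (F R2) (F R1)).
  { induction n as [|n IH]; intros R1 R2 hR1 hR2 hlt hcnt;
      (destruct (classic (exists Y, D Y /\ ltZ (F R1) (F Y) /\ ltZ (F Y) (F R2)))
        as [[Y [hY [h1 h2]]]|hno];
       [|apply adjacent_no_envy; auto;
         intros Y hY hb; apply hno; exists Y; tauto]).
    - pose proof (count_between_lt_left l _ _ _ (hl Y hY) h1 h2). lia.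
    - pose proof (count_between_lt_left l _ _ _ (hl Y hY) h1 h2).
      pose proof (count_between_lt_right l _ _ _ (hl Y hY) h1 h2).
      apply (no_envy_trans R1 Y R2); auto; apply IH; auto; lia. }
  intros R1 R2 hR1 hR2 hlt. apply (H (count_between l (F R1) (F R2)) R1 R2); auto.
Qed.

Lemma strategy_proof_of_finite_range : finite_range D F -> strategy_proof D F.
Proof.
  intros [l hl] R1 R2 hR1 hR2.
  assert (hc1 := dom_classical dom Hdom R1 (hD R1 hR1)).
  destruct (classic (R1 = R2)) as [e|hne]; [subst; apply pref_refl; auto|].
  destruct (dom_prec_total dom Hdom R1 R2 (hD R1 hR1) (hD R2 hR2) hne) as [k|k].
  - destruct (hmono R1 R2 hR1 hR2 k) as [e|hlt]; [rewrite e; apply pref_refl; auto|].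
    apply (no_envy_of_outcome_lt l hl R1 R2); auto.
  - destruct (hmono R2 R1 hR2 hR1 k) as [e|hlt]; [rewrite e; apply pref_refl; auto|].
    apply (no_envy_of_outcome_lt l hl R2 R1); auto.
Qed.

End Mechanism.

Theorem mainTheorem8 :
  forall dom : Pref -> Prop,
    rich_single_crossing dom ->
    (forall F : Pref -> R * R,
        mechanism dom F -> monotone_mech dom F -> VF_continuous dom F ->
        finite_range dom F -> strategy_proof dom F) /\
    (forall (lo hi : Pref), dom lo -> dom hi ->
      forall F : Pref -> R * R,
        mechanism (interval dom lo hi) F -> monotone_mech (interval dom lo hi) F ->
        VF_continuous (interval dom lo hi) F ->
        finite_range (interval dom lo hi) F -> strategy_proof (interval dom lo hi) F).
Proof.
  intros dom Hdom. split.
  - intros F hmech hmono hcont.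
    apply (strategy_proof_of_finite_range dom Hdom); auto.
  - intros lo hi hlo hhi F hmech hmono hcont.
    apply (strategy_proof_of_finite_range dom Hdom); auto.
    + intros X [hX _]. exact hX.
    + intros X Y Z [hX [hX1 hX2]] [hY [hY1 hY2]] hZ h1 h2. split; [exact hZ|split].
      * apply (precsim_trans dom Hdom lo X Z); auto.
      * apply (precsim_trans dom Hdom Z Y hi); auto.
Qed.
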